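(* If $G$ is a connected bipartite graph of order $n$ with minimum degree $1$, then ${\rm I}_e(G)\le n-1$.
   Context: All graphs are finite and simple. A graph is locally irregular if no two adjacent vertices have the same degree. An edge-irregulator of a graph $G$ is a set $S\subseteq E(G)$ such that $G-S$ is locally irregular; ${\rm I}_e(G)$ is the minimum cardinality of an edge-irregulator of $G$. *)

From mathcomp Require Import all_boot.
Set Implicit Arguments. Unset Strict Implicit. Unset Printing Implicit Defensive.

Definition simple_graph (T : finType) (e : rel T) : Prop :=
  symmetric e /\ irreflexive e.

Definition edges (T : finType) (e : rel T) : {set {set T}} :=
  [set E : {set T} | [exists x, exists y, e x y && (E == [set x; y])]].

Definition del_edges (T : finType) (e : rel T) (S : {set {set T}}) : rel T :=
  fun x y => e x y && ([set x; y] \notin S).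

Definition deg (T : finType) (e : rel T) (x : T) : nat := #|[set y | e x y]|.

Definition locally_irregular (T : finType) (e : rel T) : bool :=
  [forall x, forall y, e x y ==> (deg e x != deg e y)].

Definition edge_irregulator (T : finType) (e : rel T) (S : {set {set T}}) : bool :=
  (S \subset edges e) && locally_irregular (del_edges e S).

Lemma edge_irregulator_exists (T : finType) (e : rel T) :
  exists k, [exists S : {set {set T}}, edge_irregulator e S && (#|S| == k)].
Proof.
exists #|edges e|; apply/existsP; exists (edges e).
rewrite eqxx andbT /edge_irregulator subxx /=.
apply/forallP => x; apply/forallP => y; apply/implyP.
rewrite /del_edges => /andP [exy]; case/negP.
rewrite inE; apply/existsP; exists x; apply/existsP; exists y; by rewrite exy eqxx.
Qed.

Definition Ie (T : finType) (e : rel T) : nat :=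
  ex_minn (edge_irregulator_exists e).

Definition connected_graph (T : finType) (e : rel T) : Prop :=
  forall x y : T, connect e x y.

Definition bipartite (T : finType) (e : rel T) : Prop :=
  exists A : {set T}, forall x y, e x y -> (x \in A) != (y \in A).

Definition min_degree_is (T : finType) (e : rel T) (d : nat) : Prop :=
  (exists x, deg e x = d) /\ (forall x, d <= deg e x).

From mathcomp Require Import all_boot.
From mathcomp Require Import zify.
Set Implicit Arguments. Unset Strict Implicit. Unset Printing Implicit Defensive.

(* Let v0 be a vertex of degree 1 and 2-colour the graph so that v0 is black.
   Deleting a suitable set F of at most n - 1 edges makes the degree of every
   vertex x <> v0 odd exactly when x is black: grow a spanning tree leaf by
   leaf, putting the edge to a new leaf into F exactly when that leaf needs
   odd F-degree, and flip the parity asked of its parent accordingly.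
   Adjacent vertices then have degrees of different parities, v0 included:
   it keeps degree at most 1, and degree 1 is odd. *)

Section EdgeDeletion.

Variables (T : finType) (e : rel T).
Hypotheses (esym : symmetric e) (eirr : irreflexive e).

Definition edge_deg (F : {set {set T}}) (x : T) : nat := #|[set E in F | x \in E]|.

Lemma edge_deg_setU1 (F : {set {set T}}) (E : {set T}) (x : T) :
  E \notin F -> edge_deg (E |: F) x = (x \in E) + edge_deg F x.
Proof.
move=> EF; rewrite /edge_deg; case: (boolP (x \in E)) => xE.
- suff -> : [set E' in E |: F | x \in E'] = E |: [set E' in F | x \in E'].
    by rewrite cardsU1 inE (negPf EF).
  by apply/setP => E'; rewrite !inE; case: eqP => [->|]; rewrite ?xE.
- apply: eq_card => E'; rewrite !inE.
  by case: eqP => [->|]; rewrite ?(negPf xE) ?andbF.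
Qed.

Lemma edge_deg_out (F : {set {set T}}) (R : {set T}) (v : T) :
  F \subset powerset R -> v \notin R -> edge_deg F v = 0.
Proof.
move=> FR vR; apply/eqP; rewrite cards_eq0; apply/eqP/setP => E; rewrite !inE.
apply/andP => -[/(subsetP FR)]; rewrite powersetE => /subsetP ER /ER.
by rewrite (negPf vR).
Qed.

Lemma card_deleted_nbrs (F : {set {set T}}) (x : T) : F \subset edges e ->
  #|[set y | e x y && ([set x; y] \in F)]| = edge_deg F x.
Proof.
move=> FE; rewrite /edge_deg -[LHS](card_in_imset (f := fun y => [set x; y])).
  apply: eq_card => E; apply/imsetP/idP => [[y] | ].
    by rewrite !inE => /andP [_ EF] ->; rewrite EF set21.
  rewrite inE => /andP [EF xE].
  move: (subsetP FE E EF); rewrite inE => /existsP [a /existsP [b /andP [eab /eqP dE]]].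
  move: xE; rewrite dE => /set2P [-> | ->].
    by exists b => //; rewrite inE eab -dE.
  exists a; last exact: setUC.
  by rewrite inE esym eab setUC -dE.
move=> y1 y2; rewrite !inE => /andP [exy1 _] /andP [exy2 _] dxy.
have : y1 \in [set x; y2] by rewrite -dxy set22.
by case/set2P => // x_y1; rewrite x_y1 eirr in exy1.
Qed.

Lemma deg_del_edges (F : {set {set T}}) (x : T) : F \subset edges e ->
  deg e x = deg (del_edges e F) x + edge_deg F x.
Proof.
move=> FE; rewrite /deg -card_deleted_nbrs //.
rewrite -(cardsID [set y | [set x; y] \in F] [set y | e x y]) addnC.
by congr (_ + _); apply: eq_card => y; rewrite !inE // andbC.
Qed.

Lemma odd_deg_del_edges (F : {set {set T}}) (x : T) : F \subset edges e ->
  odd (deg (del_edges e F) x) = odd (deg e x) (+) odd (edge_deg F x).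
Proof. by move=> FE; rewrite (deg_del_edges x FE) oddD addbK. Qed.

Lemma deg_del_edges_le (F : {set {set T}}) (x : T) : F \subset edges e ->
  deg (del_edges e F) x <= deg e x.
Proof. by move=> FE; rewrite (deg_del_edges x FE) leq_addr. Qed.

Lemma del_edges_sym (F : {set {set T}}) : symmetric (del_edges e F).
Proof. by move=> x y; rewrite /del_edges esym setUC. Qed.

Definition parity_joinable (r : T) (R : {set T}) : Prop :=
  forall p : T -> bool, exists F : {set {set T}},
    [/\ F \subset edges e, F \subset powerset R, #|F| < #|R| &
        {in R, forall x, x != r -> odd (edge_deg F x) = p x}].

Lemma parity_joinable1 (r : T) : parity_joinable r [set r].
Proof.
move=> p; exists set0; split; rewrite ?sub0set ?cards0 ?cards1 //.
by move=> x; rewrite inE => ->.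
Qed.

Lemma parity_joinableU1 (r u v : T) (R : {set T}) :
  parity_joinable r R -> u \in R -> v \notin R -> e u v ->
  parity_joinable r (v |: R).
Proof.
move=> jR uR vR euv p.
(* When v asks for odd parity the edge uv is added, which flips the parity at u. *)
have [F [FE FR cardF Fp]] := jR (fun x => p x (+) (p v && (x == u))).
have Fv : edge_deg F v = 0 by exact: edge_deg_out FR vR.
have FvR : F \subset powerset (v |: R).
  by apply: subset_trans FR _; rewrite powersetS subsetUr.
have cardR : #|v |: R| = #|R|.+1 by rewrite cardsU1 vR.
case pv : (p v).
- have uvF : [set u; v] \notin F.
    apply: contra vR => /(subsetP FR); rewrite powersetE => /subsetP; apply.
    exact: set22.
  exists ([set u; v] |: F); split.
  + rewrite subUset sub1set FE andbT inE.
    by apply/existsP; exists u; apply/existsP; exists v; rewrite euv eqxx.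
  + rewrite subUset sub1set FvR andbT powersetE subUset !sub1set.
    by rewrite !inE eqxx uR orbT.
  + by rewrite cardR cardsU1 uvF add1n ltnS.
  + move=> x; rewrite in_setU1 edge_deg_setU1 // => /predU1P [-> _ | xR xr].
      by rewrite Fv set22.
    have xv : x != v by apply: contraNneq vR => <-.
    rewrite oddD (Fp x xR xr) pv in_set2 (negPf xv) orbF.
    by case: (x == u); case: (p x).
- exists F; split => //; first by rewrite cardR ltnW.
  move=> x; rewrite in_setU1 => /predU1P [-> _ | xR xr]; first by rewrite Fv pv.
  by rewrite (Fp x xR xr) pv addbF.
Qed.

Lemma leaving_edge (r y : T) (R : {set T}) :
  r \in R -> y \notin R -> connect e r y ->
  exists u v, [/\ u \in R, v \notin R & e u v].
Proof.
move=> rR yR /connectP [s]; elim: s r rR => [|z s IHs] r rR /=.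
  by move=> _ yr; rewrite yr rR in yR.
case/andP => erz pz ly; case: (boolP (z \in R)) => zR; last by exists r, z.
exact: IHs pz ly.
Qed.

Lemma parity_joinable_setT (r : T) (R : {set T}) :
  (forall y, connect e r y) -> r \in R -> parity_joinable r R ->
  parity_joinable r [set: T].
Proof.
move=> conn; have [k] := ubnP #|~: R|; elim: k R => // k IHk R ltRk rR jR.
have [<- // | RnT] := eqVneq R setT.
have /subsetPn [y _ yR] : ~~ ([set: T] \subset R) by rewrite subTset.
have [u [v [uR vR euv]]] := leaving_edge rR yR (conn y).
apply: (IHk (v |: R)); last exact: parity_joinableU1 jR uR vR euv.
  rewrite ltnS in ltRk; apply: leq_trans ltRk.
  by rewrite proper_card // properC properUr // sub1set.
by rewrite setU1r.
Qed.

Lemma parity_join (r : T) (p : T -> bool) : (forall y, connect e r y) ->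
  exists F : {set {set T}}, [/\ F \subset edges e, #|F| < #|T| &
    forall x, x != r -> odd (edge_deg F x) = p x].
Proof.
move=> conn.
have jT := parity_joinable_setT conn (set11 r) (parity_joinable1 r).
have [F [FE _ cardF Fp]] := jT p.
by exists F; split => // [|x]; rewrite -?cardsT //; exact: Fp.
Qed.

Lemma odd_deg_locally_irregular (f : rel T) :
  (forall x y, f x y -> odd (deg f x) != odd (deg f y)) -> locally_irregular f.
Proof.
move=> fodd; apply/forallP => x; apply/forallP => y; apply/implyP => fxy.
by apply: contraNneq (fodd x y fxy) => ->.
Qed.

Lemma bipartite_parity_irregular (A : {set T}) (v0 : T) (F : {set {set T}}) :
  (forall x y, e x y -> (x \in A) != (y \in A)) ->
  deg e v0 <= 1 -> F \subset edges e ->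
  (forall x, x != v0 -> odd (deg (del_edges e F) x) = ((x \in A) == (v0 \in A))) ->
  locally_irregular (del_edges e F).
Proof.
move=> bipA dv0 FE Fodd.
have odd_end w y : del_edges e F w y ->
    odd (deg (del_edges e F) w) = ((w \in A) == (v0 \in A)).
  case: (eqVneq w v0) => [-> fv0y | wv0 _]; last exact: Fodd.
  suff -> : deg (del_edges e F) v0 = 1 by rewrite eqxx.
  apply/anti_leq; rewrite (leq_trans (deg_del_edges_le v0 FE)) //=.
  by rewrite card_gt0; apply/set0Pn; exists y; rewrite inE.
apply: odd_deg_locally_irregular => x y fxy.
rewrite (odd_end x y fxy) (odd_end y x); last by rewrite del_edges_sym.
have /andP [exy _] := fxy.
by move: (bipA x y exy); case: (x \in A); case: (y \in A); case: (v0 \in A).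
Qed.

End EdgeDeletion.

Lemma Ie_leq_card (T : finType) (e : rel T) (S : {set {set T}}) :
  edge_irregulator e S -> Ie e <= #|S|.
Proof.
move=> irrS; rewrite /Ie; case: ex_minnP => m _; apply.
by apply/existsP; exists S; rewrite irrS eqxx.
Qed.

Theorem theorem6 (T : finType) (e : rel T) (n : nat) :
  simple_graph e -> connected_graph e -> bipartite e ->
  #|T| = n -> min_degree_is e 1 ->
  Ie e <= n - 1.
Proof.
move=> [esym eirr] conn [A bipA] <- [[v0 dv0] _].
pose side x := (x \in A) == (v0 \in A).
have [F [FE cardF Fp]] := parity_join (fun x => odd (deg e x) (+) side x) (conn v0).
have irrF : edge_irregulator e F.
  rewrite /edge_irregulator FE.
  apply: (bipartite_parity_irregular (v0 := v0) esym eirr bipA); rewrite ?dv0 //.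
  by move=> x xv0; rewrite odd_deg_del_edges // Fp // addKb.
by apply: leq_trans (Ie_leq_card irrF) _; lia.
Qed.
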